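(* Let $n\ge1$ and let the zeros $z_1(x),\ldots,z_n(x)$ of $\psi_n(x,z)=\Gamma(1-z)P^z_n(\tanh x)$ with respect to $z$ be labeled so that they are ordered from large to small near $x=0$ and depend twice differentiably on $x$ with $z_j(x)\ne z_k(x)$ for $j\ne k$. Then $$z_\ell''(x)+2z_\ell(x)z_\ell'(x)=\sum_{j=1,\,j\neq\ell}^n\frac{2z_\ell'(x)z_j'(x)}{z_\ell(x)-z_j(x)},\qquad \ell=1,\ldots,n,$$ with initial conditions $z_\ell(0)=n+1-2\ell$ and $$z_\ell'(0)=\frac{-\prod_{j=1,\,j\neq|n+1-2\ell|}^n\bigl((n+1-2\ell)^2-j^2\bigr)}{2^{n-1}\prod_{j=1,\,j\neq\ell,\,n+1-\ell}^n 2(\ell-j)^2},\qquad \ell=1,\ldots,n.$$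
   Context: Fix an integer $n\ge1$. For $x\in\mathbb{R}$ and $z\in\mathbb{C}\setminus\{1,\ldots,n\}$ define $$\psi_n(x,z)=\frac{e^{zx}}{(1+e^{-2x})^n}\sum_{m=0}^n e^{-2mx}\binom{n}{m}\prod_{j=1}^m\frac{z+n+1-j}{z-j},$$ which equals $\Gamma(1-z)P_n^z(\tanh x)$, where $P_n^z$ is the associated Legendre function of degree $n$ and order $z$ and $\Gamma$ is the Euler gamma function. For each $x$, the polynomial $Q_x(z)=\sum_{m=0}^n e^{-2mx}\binom{n}{m}\prod_{j=1}^m(z+n+1-j)\prod_{k=m+1}^n(z-k)$ has degree $n$ with leading coefficient $(1+e^{-2x})^n$; its roots (with multiplicity) are denoted $z_1(x),\ldots,z_n(x)$, so that $\psi_n(x,z)=\frac{e^{zx}}{(1+e^{-2x})^n}\prod_{j=1}^n\frac{z-z_j(x)}{z-j}$. These are called the zeros of $\psi_n(x,\cdot)$. *)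

From Stdlib Require Import Reals List ZArith.
From Coquelicot Require Import Coquelicot.
Open Scope R_scope.

Definition csum (l : list nat) (f : nat -> C) : C :=
  fold_right (fun j acc => Cplus (f j) acc) (RtoC 0) l.
Definition cprod (l : list nat) (f : nat -> C) : C :=
  fold_right (fun j acc => Cmult (f j) acc) (RtoC 1) l.
Definition rprod (l : list nat) (f : nat -> R) : R :=
  fold_right (fun j acc => f j * acc) 1 l.

Definition Qpoly (n : nat) (x : R) (z : C) : C :=
  csum (seq 0 (S n)) (fun m =>
    Cmult (RtoC (exp (-2 * INR m * x) * Binomial.C n m))
      (Cmult (cprod (seq 1 m) (fun j => Cplus z (RtoC (INR n + 1 - INR j))))
             (cprod (seq (S m) (n - m)) (fun k => Cminus z (RtoC (INR k)))))).

Definition absdiff (n l : nat) : nat :=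
  Z.abs_nat (Z.of_nat (S n) - 2 * Z.of_nat l).

Definition zprime0 (n l : nat) : R :=
  let c := INR (S n) - 2 * INR l in
  (- rprod (filter (fun j => negb (Nat.eqb j (absdiff n l))) (seq 1 n))
          (fun j => c ^ 2 - INR j ^ 2))
  / (2 ^ (n - 1) *
     rprod (filter (fun j => andb (negb (Nat.eqb j l)) (negb (Nat.eqb j (S n - l))))
                   (seq 1 n))
           (fun j => 2 * (INR l - INR j) ^ 2)).

(* Q_x(w) = (1 + e^{-2x})^n (w - z_1(x)) ... (w - z_n(x)) is, up to the factor
   e^{wx} (1 + e^{-2x})^{-n}, the function psi_n(x, w), so as a function of x it satisfies
   the associated Legendre equation.  Differentiating the factorisation twice and evaluating
   at the zero w = z_l(x) kills every term but those of the differential equation.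

   At x = 0, Q_0 satisfies the ladder relation (w + n) Q_0(w) + dQ/dx(0, w) = (w - n) Q_0(w + 1)
   and the parity Q_0(-w) = (-1)^n Q_0(w); together they give
   (w + n) Q_0(w - 1) = (w - n) Q_0(w + 1).  Hence if w is a zero, either w = n - 1 or w + 2
   is a zero, and the ordering of the zeros forces z_l(0) = n + 1 - 2l.  The ladder relation
   at w = z_l(0) then expresses z_l'(0) as a quotient of products, which a factorial
   computation identifies with the stated formula. *)

From Stdlib Require Import Reals List ZArith Lra Lia Classical.
From Coquelicot Require Import Coquelicot.
Open Scope R_scope.

(** * Derivatives of complex-valued functions of a real variable *)

Lemma is_derive_C_iff (f : R -> C) x l : is_derive f x l <->
  is_derive (fun t => fst (f t)) x (fst l) /\ is_derive (fun t => snd (f t)) x (snd l).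
Proof.
  unfold is_derive. split.
  - intros H; split.
    + apply filterdiff_ext_lin with (fun y => fst (scal y l)); [|reflexivity].
      apply (filterdiff_comp f fst _ fst H), filterdiff_linear, is_linear_fst.
    + apply filterdiff_ext_lin with (fun y => snd (scal y l)); [|reflexivity].
      apply (filterdiff_comp f snd _ snd H), filterdiff_linear, is_linear_snd.
  - intros [H1 H2].
    apply filterdiff_ext with (fun t => (fst (f t), snd (f t))).
    { intros y. destruct (f y); reflexivity. }
    apply filterdiff_ext_lin with (fun y => (scal y (fst l), scal y (snd l))).
    + apply (filterdiff_comp'_2 _ _ pair x _ _ pair H1 H2), filterdiff_linear.
      apply is_linear_prod; [apply is_linear_fst | apply is_linear_snd].
    + intros y. destruct l. reflexivity.
Qed.

Lemma is_derive_C_unique (f : R -> C) x l1 l2 :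
  is_derive f x l1 -> is_derive f x l2 -> l1 = l2.
Proof.
  intros [A1 B1]%is_derive_C_iff [A2 B2]%is_derive_C_iff.
  apply is_derive_unique in A1, B1, A2, B2.
  destruct l1, l2; simpl in *. f_equal; congruence.
Qed.

Lemma is_derive_Cplus (f g : R -> C) x df dg : is_derive f x df -> is_derive g x dg ->
  is_derive (fun t => f t + g t)%C x (df + dg)%C.
Proof. exact (is_derive_plus f g x df dg). Qed.

Lemma is_derive_Cconst (c : C) x : is_derive (fun _ : R => c) x (RtoC 0).
Proof. exact (@is_derive_const R_AbsRing _ c x). Qed.

Lemma is_derive_Cmult (f g : R -> C) x df dg : is_derive f x df -> is_derive g x dg ->
  is_derive (fun t => f t * g t)%C x (df * g x + f x * dg)%C.
Proof.
  intros [Hf1 Hf2]%is_derive_C_iff [Hg1 Hg2]%is_derive_C_iff.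
  assert (Hmul : forall u v du dv, is_derive u x du -> is_derive v x dv ->
            is_derive (fun t => u t * v t) x (du * v x + u x * dv)).
  { intros u v du dv Hu Hv. apply (is_derive_mult u v x du dv Hu Hv), Rmult_comm. }
  apply is_derive_C_iff; split; simpl.
  - match goal with |- is_derive _ _ ?d => replace d with
      (minus (fst df * fst (g x) + fst (f x) * fst dg)
             (snd df * snd (g x) + snd (f x) * snd dg)) end.
    + apply (is_derive_minus (fun t => fst (f t) * fst (g t))
                             (fun t => snd (f t) * snd (g t))); auto.
    + unfold minus, plus, opp; simpl. ring.
  - match goal with |- is_derive _ _ ?d => replace d with
      (plus (fst df * snd (g x) + fst (f x) * snd dg)
            (snd df * fst (g x) + snd (f x) * fst dg)) end.
    + apply (is_derive_plus (fun t => fst (f t) * snd (g t))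
                            (fun t => snd (f t) * fst (g t))); auto.
    + unfold plus; simpl. ring.
Qed.

Tactic Notation "push_RtoC" :=
  repeat first [rewrite RtoC_mult | rewrite RtoC_plus | rewrite RtoC_minus | rewrite RtoC_opp].
Tactic Notation "push_RtoC" "in" hyp(H) :=
  repeat first [rewrite RtoC_mult in H | rewrite RtoC_plus in H | rewrite RtoC_minus in H
               | rewrite RtoC_opp in H].

Lemma is_derive_RtoC (g : R -> R) x d :
  is_derive g x d -> is_derive (fun t => RtoC (g t)) x (RtoC d).
Proof.
  intros H. apply is_derive_C_iff; split; simpl; auto.
  apply (@is_derive_const R_AbsRing R_NormedModule).
Qed.

Lemma is_derive_RtoC_mult (g : R -> R) (c : C) x d :
  is_derive g x d -> is_derive (fun t => RtoC (g t) * c)%C x (RtoC d * c)%C.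
Proof.
  intros H. replace (RtoC d * c)%C with (RtoC d * c + RtoC (g x) * 0)%C by ring.
  apply (is_derive_Cmult (fun t => RtoC (g t))); [apply is_derive_RtoC, H | apply is_derive_Cconst].
Qed.

Lemma is_derive_Cminus_l (c : C) (g : R -> C) x d :
  is_derive g x d -> is_derive (fun t => c - g t)%C x (- d)%C.
Proof.
  intros H. replace (- d)%C with (0 - d)%C by ring.
  exact (@is_derive_minus R_AbsRing _ (fun _ => c) g x (RtoC 0) d (is_derive_Cconst c x) H).
Qed.

Lemma is_derive_Copp (g : R -> C) x d :
  is_derive g x d -> is_derive (fun t => - g t)%C x (- d)%C.
Proof. exact (@is_derive_opp R_AbsRing _ g x d). Qed.

(** * Sums and products over index lists *)

(* [csum], [cprod] and [rprod] are instances of [lfold] up to conversion. *)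
Definition lfold {A : Type} (op : A -> A -> A) (e : A) (l : list nat) (f : nat -> A) : A :=
  fold_right (fun j acc => op (f j) acc) e l.

Lemma filter_neq_notin (l : list nat) k :
  ~ In k l -> filter (fun j => negb (Nat.eqb j k)) l = l.
Proof.
  induction l as [|a l IH]; simpl; intros H; auto.
  destruct (Nat.eqb_spec a k); [tauto|]. simpl. rewrite IH; auto.
Qed.

Lemma In_seq_remove n l j :
  In j (filter (fun j => negb (Nat.eqb j l)) (seq 1 n)) <-> (1 <= j <= n)%nat /\ j <> l.
Proof.
  rewrite filter_In, in_seq. destruct (Nat.eqb_spec j l); simpl; intuition lia.
Qed.

Section IndexedFold.
Context {A : Type} (op : A -> A -> A) (e : A).
Hypothesis op_assoc : forall a b c, op a (op b c) = op (op a b) c.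
Hypothesis op_comm : forall a b, op a b = op b a.
Hypothesis op_e : forall a, op e a = a.

Lemma lfold_ext_in l f g : (forall j, In j l -> f j = g j) -> lfold op e l f = lfold op e l g.
Proof.
  induction l as [|a l IH]; intros H; simpl; auto.
  rewrite H, IH; simpl; auto. intros j Hj. apply H. simpl; auto.
Qed.

Lemma lfold_app l1 l2 f : lfold op e (l1 ++ l2) f = op (lfold op e l1 f) (lfold op e l2 f).
Proof. induction l1 as [|a l1 IH]; simpl; [rewrite op_e | rewrite IH, op_assoc]; auto. Qed.

Lemma lfold_map l (h : nat -> nat) f : lfold op e (map h l) f = lfold op e l (fun j => f (h j)).
Proof. induction l as [|a l IH]; simpl; [|rewrite IH]; auto. Qed.

Lemma lfold_shift s d k f :
  lfold op e (seq (s + d) k) f = lfold op e (seq s k) (fun j => f (j + d)%nat).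
Proof.
  revert s; induction k as [|k IH]; intros s; simpl; auto.
  rewrite <- IH. reflexivity.
Qed.

Lemma lfold_rev s k f :
  lfold op e (seq s k) f = lfold op e (seq s k) (fun j => f (2 * s + k - 1 - j)%nat).
Proof.
  revert s; induction k as [|k IH]; intros s; auto.
  transitivity (op (f s) (lfold op e (seq (S s) k) f)); [reflexivity|].
  rewrite IH, <- seq_shift, lfold_map, seq_S, lfold_app.
  change (lfold op e ((s + k)%nat :: nil) ?g) with (op (g (s + k)%nat) e).
  rewrite (op_comm _ e), op_e, op_comm. f_equal.
  - apply lfold_ext_in. intros j _. f_equal. lia.
  - f_equal. lia.
Qed.

Lemma lfold_remove l f k : NoDup l -> In k l ->
  lfold op e l f = op (f k) (lfold op e (filter (fun j => negb (Nat.eqb j k)) l) f).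
Proof.
  induction l as [|a l IH]; intros Hn Hi; [contradiction|].
  inversion Hn; subst. simpl. destruct Hi as [<-|Hi].
  - rewrite Nat.eqb_refl, filter_neq_notin; auto.
  - destruct (Nat.eqb_spec a k); [subst; contradiction|]. simpl.
    rewrite IH, !op_assoc, (op_comm (f a)); auto.
Qed.

Lemma lfold_op l f g :
  lfold op e l (fun j => op (f j) (g j)) = op (lfold op e l f) (lfold op e l g).
Proof.
  induction l as [|a l IH]; simpl; [rewrite op_e|rewrite IH]; auto.
  rewrite !op_assoc. f_equal. rewrite <- !op_assoc. f_equal. apply op_comm.
Qed.

End IndexedFold.

Lemma csum_cons a l f : csum (a :: l) f = (f a + csum l f)%C.
Proof. reflexivity. Qed.
Lemma cprod_cons a l f : cprod (a :: l) f = (f a * cprod l f)%C.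
Proof. reflexivity. Qed.
Lemma rprod_cons a l f : rprod (a :: l) f = f a * rprod l f.
Proof. reflexivity. Qed.

Lemma csum_ext_in l f g : (forall j, In j l -> f j = g j) -> csum l f = csum l g.
Proof. apply lfold_ext_in. Qed.
Lemma csum_app l1 l2 f : csum (l1 ++ l2) f = (csum l1 f + csum l2 f)%C.
Proof. apply lfold_app; intros; ring. Qed.
Lemma csum_map l h f : csum (map h l) f = csum l (fun j => f (h j)).
Proof. apply lfold_map. Qed.
Lemma csum_rev s k f :
  csum (seq s k) f = csum (seq s k) (fun j => f (2 * s + k - 1 - j)%nat).
Proof. apply lfold_rev; intros; ring. Qed.
Lemma csum_plus l f g : csum l (fun j => f j + g j)%C = (csum l f + csum l g)%C.
Proof. apply lfold_op; intros; ring. Qed.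

Lemma cprod_ext_in l f g : (forall j, In j l -> f j = g j) -> cprod l f = cprod l g.
Proof. apply lfold_ext_in. Qed.
Lemma cprod_app l1 l2 f : cprod (l1 ++ l2) f = (cprod l1 f * cprod l2 f)%C.
Proof. apply lfold_app; intros; ring. Qed.
Lemma cprod_shift s d k f :
  cprod (seq (s + d) k) f = cprod (seq s k) (fun j => f (j + d)%nat).
Proof. apply lfold_shift. Qed.
Lemma cprod_rev s k f :
  cprod (seq s k) f = cprod (seq s k) (fun j => f (2 * s + k - 1 - j)%nat).
Proof. apply lfold_rev; intros; ring. Qed.
Lemma cprod_remove l f k : NoDup l -> In k l ->
  cprod l f = (f k * cprod (filter (fun j => negb (Nat.eqb j k)) l) f)%C.
Proof. apply lfold_remove; intros; ring. Qed.

Lemma rprod_ext_in l f g : (forall j, In j l -> f j = g j) -> rprod l f = rprod l g.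
Proof. apply lfold_ext_in. Qed.
Lemma rprod_app l1 l2 f : rprod (l1 ++ l2) f = rprod l1 f * rprod l2 f.
Proof. apply lfold_app; intros; ring. Qed.
Lemma rprod_shift s d k f :
  rprod (seq (s + d) k) f = rprod (seq s k) (fun j => f (j + d)%nat).
Proof. apply lfold_shift. Qed.
Lemma rprod_rev s k f :
  rprod (seq s k) f = rprod (seq s k) (fun j => f (2 * s + k - 1 - j)%nat).
Proof. apply lfold_rev; intros; ring. Qed.
Lemma rprod_remove l f k : NoDup l -> In k l ->
  rprod l f = f k * rprod (filter (fun j => negb (Nat.eqb j k)) l) f.
Proof. apply lfold_remove; intros; ring. Qed.
Lemma rprod_mult l f g : rprod l (fun j => f j * g j) = rprod l f * rprod l g.
Proof. apply lfold_op; intros; ring. Qed.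

Lemma Cmult_integral (a b : C) : (a * b)%C = 0 -> a = 0 \/ b = 0.
Proof.
  intros H. destruct (classic (a = 0)) as [E|E]; auto. right.
  replace b with (/ a * (a * b))%C by (field; auto). rewrite H. ring.
Qed.

Lemma Cmult_eq_reg_l (s a b : C) : s <> 0 -> (s * a = s * b)%C -> a = b.
Proof.
  intros Hs E. replace a with (/ s * (s * a))%C by (field; auto).
  rewrite E. field. auto.
Qed.

Lemma csum_scal l (c : C) f : csum l (fun j => c * f j)%C = (c * csum l f)%C.
Proof. induction l as [|a l IH]; [simpl; ring|]. rewrite !csum_cons, IH. ring. Qed.

Lemma csum_linear3 (L : C -> C -> C -> C) l f0 f1 f2 :
  L 0 0 0 = 0 ->
  (forall a b c a' b' c', L (a + a') (b + b') (c + c') = L a b c + L a' b' c')%C ->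
  L (csum l f0) (csum l f1) (csum l f2) = csum l (fun m => L (f0 m) (f1 m) (f2 m)).
Proof.
  intros H0 HL. induction l as [|a l IH]; auto.
  rewrite !csum_cons, HL, IH. reflexivity.
Qed.

Lemma csum_seq0_first n f :
  csum (seq 0 (S n)) f = (f 0%nat + csum (seq 0 n) (fun m => f (S m)))%C.
Proof.
  change (seq 0 (S n)) with (0%nat :: seq 1 n).
  rewrite <- seq_shift, csum_cons, csum_map. reflexivity.
Qed.

Lemma csum_seq0_last n f : csum (seq 0 (S n)) f = (csum (seq 0 n) f + f n)%C.
Proof. rewrite seq_S, csum_app. simpl. ring. Qed.

Lemma csum_reindex n (h u v : nat -> C) :
  h 0%nat = u 0%nat -> v n = 0 -> (forall m, (m < n)%nat -> h (S m) = u (S m) + v m)%C ->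
  csum (seq 0 (S n)) h = csum (seq 0 (S n)) (fun m => u m + v m)%C.
Proof.
  intros H0 Hn Hs.
  rewrite csum_plus, csum_seq0_first, (csum_seq0_first n u), (csum_seq0_last n v), Hn, H0.
  rewrite (csum_ext_in (seq 0 n) (fun m => h (S m)) (fun m => u (S m) + v m)%C).
  - rewrite csum_plus. ring.
  - intros j Hj. apply in_seq in Hj. apply Hs. lia.
Qed.

Lemma cprod_RtoC l g : cprod l (fun j => RtoC (g j)) = RtoC (rprod l g).
Proof. induction l as [|a l IH]; auto. rewrite cprod_cons, rprod_cons, IH, RtoC_mult. auto. Qed.

Lemma cprod_opp l f : cprod l (fun j => - f j)%C = (RtoC ((-1) ^ length l) * cprod l f)%C.
Proof.
  induction l as [|a l IH]; [simpl; ring|].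
  rewrite !cprod_cons, IH. simpl length. cbn [pow]. rewrite RtoC_mult. ring.
Qed.

Lemma rprod_opp l f : rprod l (fun j => - f j) = (-1) ^ length l * rprod l f.
Proof. induction l as [|a l IH]; [simpl; ring|]. rewrite !rprod_cons, IH. simpl. ring. Qed.

Lemma rprod_const l c : rprod l (fun _ => c) = c ^ length l.
Proof. induction l as [|a l IH]; auto. rewrite rprod_cons, IH. simpl. ring. Qed.

Lemma cprod_eq0 l f : cprod l f = 0 <-> exists j, In j l /\ f j = 0.
Proof.
  induction l as [|a l IH].
  - split; [intros H; injection H; lra | intros [j [[] _]]].
  - rewrite cprod_cons. split.
    + intros [Ha|Hl]%Cmult_integral.
      * exists a. simpl; auto.
      * destruct (proj1 IH Hl) as [j [Hj Hf]]. exists j. simpl; auto.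
    + intros [j [[<-|Hj] Hf]]; [rewrite Hf; ring|].
      rewrite (proj2 IH); [ring|eauto].
Qed.

Lemma rprod_neq0 l f : (forall j, In j l -> f j <> 0) -> rprod l f <> 0.
Proof.
  induction l as [|a l IH]; intros H; [simpl; lra|].
  rewrite rprod_cons. apply Rmult_integral_contrapositive_currified.
  - apply H. simpl; auto.
  - apply IH. intros j Hj. apply H. simpl; auto.
Qed.

Lemma csum_zero l : csum l (fun _ => 0) = 0.
Proof. induction l as [|a l IH]; auto. rewrite csum_cons, IH. ring. Qed.

Fixpoint cprod_deriv (l : list nat) (f f' : nat -> R -> C) (x : R) : C :=
  match l with
  | nil => 0
  | a :: l' => (f' a x * cprod l' (fun j => f j x) + f a x * cprod_deriv l' f f' x)%C
  end.

Lemma is_derive_cprod l (f f' : nat -> R -> C) x :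
  (forall j, In j l -> is_derive (f j) x (f' j x)) ->
  is_derive (fun t => cprod l (fun j => f j t)) x (cprod_deriv l f f' x).
Proof.
  induction l as [|a l IH]; intros H; simpl.
  - apply is_derive_Cconst.
  - apply is_derive_Cmult; [apply H; simpl; auto|].
    apply IH. intros j Hj. apply H. simpl; auto.
Qed.

Lemma ex_derive_cprod_deriv l (f f' : nat -> R -> C) x :
  (forall j, In j l -> is_derive (f j) x (f' j x) /\ exists d, is_derive (f' j) x d) ->
  exists d, is_derive (fun t => cprod_deriv l f f' t) x d.
Proof.
  induction l as [|a l IH]; intros H; simpl.
  - eexists. apply is_derive_Cconst.
  - destruct (H a) as [Ha [da Ha']]; [simpl; auto|].
    destruct IH as [d Hd]; [intros j Hj; apply H; simpl; auto|].
    eexists. apply is_derive_Cplus; apply is_derive_Cmult; eauto.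
    apply is_derive_cprod. intros j Hj. apply H. simpl; auto.
Qed.

Lemma cprod_deriv_log l (f f' : nat -> R -> C) x : (forall j, In j l -> f j x <> 0) ->
  cprod_deriv l f f' x = (cprod l (fun j => f j x) * csum l (fun j => f' j x / f j x))%C.
Proof.
  induction l as [|a l IH]; intros H; [simpl; ring|].
  cbn [cprod_deriv]. rewrite IH by (intros; apply H; simpl; auto).
  rewrite cprod_cons, csum_cons. field. apply H. simpl; auto.
Qed.

Lemma is_derive_csum l (F : nat -> R -> C) (F' : nat -> C) x :
  (forall m, In m l -> is_derive (F m) x (F' m)) ->
  is_derive (fun t => csum l (fun m => F m t)) x (csum l F').
Proof.
  induction l as [|a l IH]; intros H; simpl.
  - apply is_derive_Cconst.
  - apply is_derive_Cplus; [apply H; simpl; auto|].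
    apply IH. intros m Hm. apply H. simpl; auto.
Qed.

(** * The polynomial [Q] and its derivatives in [x] *)

Definition Qfactor (n m : nat) (w : C) : C :=
  (cprod (seq 1 m) (fun j => w + RtoC (INR n + 1 - INR j)) *
   cprod (seq (S m) (n - m)) (fun k => w - RtoC (INR k)))%C.

Definition Qderiv (n k : nat) (x : R) (w : C) : C :=
  csum (seq 0 (S n)) (fun m =>
    RtoC ((-2 * INR m) ^ k * (exp (-2 * INR m * x) * Binomial.C n m)) * Qfactor n m w)%C.

Lemma Qpoly_Qderiv0 n x w : Qpoly n x w = Qderiv n 0 x w.
Proof. apply csum_ext_in. intros m _. simpl. rewrite Rmult_1_l. reflexivity. Qed.

Lemma is_derive_Qderiv n k x w : is_derive (fun t => Qderiv n k t w) x (Qderiv n (S k) x w).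
Proof.
  apply is_derive_csum. intros m _. apply is_derive_RtoC_mult.
  auto_derive; [auto|]. simpl. ring.
Qed.

Lemma Qfactor_succ n m w : (m < n)%nat ->
  ((w - RtoC (INR (S m))) * Qfactor n (S m) w = (w + RtoC (INR n - INR m)) * Qfactor n m w)%C.
Proof.
  intros Hm. unfold Qfactor.
  replace (n - m)%nat with (S (n - S m)) by lia.
  rewrite seq_S, cprod_app. cbn [seq]. rewrite !cprod_cons.
  replace (INR n + 1 - INR (1 + m)) with (INR n - INR m) by (rewrite plus_INR; simpl; ring).
  change (cprod nil ?f) with (RtoC 1). ring.
Qed.

Lemma binomial_succ n m : (m < n)%nat ->
  Binomial.C n (S m) * INR (S m) = (INR n - INR m) * Binomial.C n m.
Proof.
  intros Hm. rewrite Binomial.pascal_step3 by auto. rewrite minus_INR by lia.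
  field. apply not_0_INR. lia.
Qed.

(* With t = e^{-2x} and psi = e^{wx} (1+t)^{-n} Q, this is the associated Legendre
   equation psi'' = (w^2 - n(n+1) sech^2 x) psi. *)
Lemma Qderiv_legendre n x w :
  (RtoC (1 + exp (-2 * x)) * (Qderiv n 2 x w + 2 * (w * Qderiv n 1 x w)) +
   RtoC (4 * exp (-2 * x)) * (RtoC (INR n) * ((RtoC (INR n) + w) * Qderiv n 0 x w) +
                              RtoC (INR n) * Qderiv n 1 x w))%C = 0.
Proof.
  set (t := exp (-2 * x)).
  set (L := fun a b c => (RtoC (1 + t) * (c + 2 * (w * b)) +
    RtoC (4 * t) * (RtoC (INR n) * ((RtoC (INR n) + w) * a) + RtoC (INR n) * b))%C).
  change (L (Qderiv n 0 x w) (Qderiv n 1 x w) (Qderiv n 2 x w) = 0).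
  unfold Qderiv. rewrite csum_linear3 by (intros; unfold L; ring).
  set (e := fun m : nat => exp (-2 * INR m * x)).
  set (a := fun m => (RtoC (Binomial.C n m) * Qfactor n m w)%C).
  set (f := fun m : nat => (RtoC (e m) * RtoC (4 * INR m) * (RtoC (INR m) - w) * a m)%C).
  set (g := fun m : nat =>
    (RtoC (e (S m)) * 4 * RtoC (INR n - INR m) * (RtoC (INR n - INR m) + w) * a m)%C).
  (* The [m]-th term is [f m + g m] with [g m = - f (m + 1)]: the sum telescopes. *)
  rewrite (csum_ext_in _ _ (fun m => f m + g m)%C).
  - rewrite <- (csum_reindex n (fun _ => RtoC 0) f g), csum_zero; auto.
    + unfold f. simpl INR. rewrite Rmult_0_r. ring.
    + unfold g. rewrite Rminus_diag. ring.
    + intros m Hm.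
      assert (Hg : g m = (- f (S m))%C).
      { unfold f, g, a.
        assert (HQ := Qfactor_succ n m w Hm).
        assert (HB := f_equal RtoC (binomial_succ n m Hm)). rewrite !RtoC_mult in HB.
        transitivity (RtoC (e (S m)) * 4 * ((RtoC (INR n - INR m) * RtoC (Binomial.C n m)) *
                        ((w + RtoC (INR n - INR m)) * Qfactor n m w)))%C; [ring|].
        rewrite <- HQ, <- HB. push_RtoC. ring. }
      rewrite Hg. ring.
  - intros m _. unfold f, g, a, L, e.
    replace (exp (-2 * INR (S m) * x)) with (exp (-2 * INR m * x) * t)
      by (unfold t; rewrite <- exp_plus, S_INR; f_equal; ring).
    simpl pow. push_RtoC. ring.
Qed.

(** * The zeros satisfy the differential equation *)

Definition Tpow (n : nat) (x : R) : R := (1 + exp (-2 * x)) ^ n.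
Definition Tpow' (n : nat) (x : R) : R :=
  INR n * (1 + exp (-2 * x)) ^ Nat.pred n * (-2 * exp (-2 * x)).

Lemma is_derive_Tpow n x : is_derive (Tpow n) x (Tpow' n x).
Proof. unfold Tpow, Tpow'. auto_derive; [auto|]. ring. Qed.

Lemma ex_derive_Tpow' n x : exists d, is_derive (Tpow' n) x d.
Proof. eexists. apply Derive_correct. unfold Tpow'. auto_derive. auto. Qed.

Lemma Tpow_pos n x : 0 < Tpow n x.
Proof. apply pow_lt. pose proof (exp_pos (-2 * x)). lra. Qed.

Lemma Tpow'_eq n x :
  Tpow' n x = -2 * INR n * exp (-2 * x) * Tpow n x / (1 + exp (-2 * x)).
Proof.
  pose proof (exp_pos (-2 * x)).
  unfold Tpow, Tpow'. destruct n; simpl; field; lra.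
Qed.

Section ZerosODE.
Variables (n : nat) (z z' z'' : nat -> R -> C).
Hypothesis hroots : forall (x : R) (w : C),
  Qpoly n x w = (RtoC ((1 + exp (-2 * x)) ^ n) * cprod (seq 1 n) (fun j => w - z j x))%C.
Hypothesis hd1 : forall j x, (1 <= j <= n)%nat -> is_derive (z j) x (z' j x).
Hypothesis hd2 : forall j x, (1 <= j <= n)%nat -> is_derive (z' j) x (z'' j x).
Variables (l : nat) (hl : (1 <= l <= n)%nat).

Let others := filter (fun j => negb (Nat.eqb j l)) (seq 1 n).
Let H (w : C) (t : R) : C := cprod others (fun j => w - z j t)%C.
Let H' (w : C) (t : R) : C :=
  cprod_deriv others (fun j t => w - z j t)%C (fun j t => - z' j t)%C t.

Lemma is_derive_H w t : is_derive (H w) t (H' w t).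
Proof.
  apply is_derive_cprod. intros j [Hj _]%In_seq_remove.
  apply is_derive_Cminus_l, hd1, Hj.
Qed.

Lemma ex_derive_H' w t : exists d, is_derive (H' w) t d.
Proof.
  apply ex_derive_cprod_deriv. intros j [Hj _]%In_seq_remove. split.
  - apply is_derive_Cminus_l, hd1, Hj.
  - eexists. apply is_derive_Copp, hd2, Hj.
Qed.

Lemma Qderiv0_factor w t : Qderiv n 0 t w = (RtoC (Tpow n t) * ((w - z l t) * H w t))%C.
Proof.
  rewrite <- Qpoly_Qderiv0, hroots. unfold Tpow, H, others. f_equal.
  apply (cprod_remove _ (fun j => w - z j t)%C); [apply seq_NoDup | apply in_seq; lia].
Qed.

Lemma Qderiv1_factor w t : Qderiv n 1 t w =
  (RtoC (Tpow' n t) * ((w - z l t) * H w t) +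
   RtoC (Tpow n t) * (- z' l t * H w t + (w - z l t) * H' w t))%C.
Proof.
  apply (is_derive_C_unique (fun s => Qderiv n 0 s w) t); [apply is_derive_Qderiv|].
  apply (is_derive_ext (fun s => RtoC (Tpow n s) * ((w - z l s) * H w s))%C).
  { intros s. symmetry. apply Qderiv0_factor. }
  apply (is_derive_Cmult (fun s => RtoC (Tpow n s))).
  - apply is_derive_RtoC, is_derive_Tpow.
  - apply (is_derive_Cmult (fun s => w - z l s)%C).
    + apply is_derive_Cminus_l, hd1, hl.
    + apply is_derive_H.
Qed.

Lemma Qderiv2_at_zero x : let w := z l x in
  Qderiv n 2 x w = (- (2 * RtoC (Tpow' n x) * z' l x * H w x)
                    - RtoC (Tpow n x) * (z'' l x * H w x + 2 * z' l x * H' w x))%C.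
Proof.
  intros w.
  destruct (ex_derive_Tpow' n x) as [dT dT'].
  destruct (ex_derive_H' w x) as [dH dH'].
  assert (dg : is_derive (fun t => w - z l t)%C x (- z' l x)%C)
    by apply is_derive_Cminus_l, hd1, hl.
  eassert (dQ1 : is_derive (fun t => Qderiv n 1 t w) x _).
  { apply (is_derive_ext (fun t =>
      RtoC (Tpow' n t) * ((w - z l t) * H w t) +
      RtoC (Tpow n t) * (- z' l t * H w t + (w - z l t) * H' w t))%C).
    { intros t. symmetry. apply Qderiv1_factor. }
    apply is_derive_Cplus.
    - apply (is_derive_Cmult (fun t => RtoC (Tpow' n t))); [apply is_derive_RtoC, dT'|].
      apply (is_derive_Cmult (fun t => w - z l t)%C); [apply dg | apply is_derive_H].
    - apply (is_derive_Cmult (fun t => RtoC (Tpow n t)));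
        [apply is_derive_RtoC, is_derive_Tpow|].
      apply is_derive_Cplus.
      + apply (is_derive_Cmult (fun t => - z' l t)%C);
          [apply is_derive_Copp, hd2, hl | apply is_derive_H].
      + apply (is_derive_Cmult (fun t => w - z l t)%C); [apply dg | apply dH']. }
  rewrite (is_derive_C_unique _ _ _ _ (is_derive_Qderiv n 1 x w) dQ1).
  replace (w - z l x)%C with (RtoC 0) by (unfold w; ring). ring.
Qed.

Lemma zero_ode_factored x : let w := z l x in
  ((z'' l x + 2 * (z l x * z' l x)) * H w x + 2 * z' l x * H' w x)%C = 0.
Proof.
  (* In the Legendre equation at the zero [w], the terms in [Tpow'] cancel against
     [4 t n Q_1] because (1 + t) Tpow' = -2 n t Tpow; what is left is (1 + t) Tpow
     times the claimed expression. *)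
  intros w.
  assert (E := Qderiv_legendre n x w).
  rewrite Qderiv2_at_zero, Qderiv1_factor, Qderiv0_factor, Tpow'_eq in E. subst w.
  set (t := exp (-2 * x)) in E.
  assert (Ht : 1 + t <> 0) by (unfold t; pose proof (exp_pos (-2 * x)); lra).
  assert (HT := Tpow_pos n x).
  rewrite RtoC_div in E by auto. push_RtoC in E.
  match goal with |- ?X = _ => match type of E with ?Y = _ =>
    replace X with (Y / (- ((1 + RtoC t) * RtoC (Tpow n x))))%C end end.
  - rewrite E. unfold Cdiv. apply Cmult_0_l.
  - field. split; intros Hc; rewrite <- ?RtoC_plus in Hc; apply RtoC_inj in Hc; lra.
Qed.

Lemma Qderiv1_at_zero x : Qderiv n 1 x (z l x) =
  (- (RtoC (Tpow n x) * z' l x *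
      cprod (filter (fun j => negb (Nat.eqb j l)) (seq 1 n)) (fun j => z l x - z j x)))%C.
Proof.
  rewrite Qderiv1_factor. fold others. unfold H.
  replace (z l x - z l x)%C with (RtoC 0) by ring. ring.
Qed.

Hypothesis hdist : forall j k x, (1 <= j <= n)%nat -> (1 <= k <= n)%nat -> j <> k ->
  z j x <> z k x.

Lemma zero_ode x :
  (z'' l x + 2 * (z l x * z' l x))%C =
  csum (filter (fun j => negb (Nat.eqb j l)) (seq 1 n))
    (fun j => 2 * (z' l x * z' j x) / (z l x - z j x))%C.
Proof.
  fold others.
  assert (Hnz : forall j, In j others -> (z l x - z j x)%C <> 0).
  { intros j [Hj Hjl]%In_seq_remove E. apply (hdist l j x hl Hj (not_eq_sym Hjl)).
    replace (z l x) with (z l x - z j x + z j x)%C by ring. rewrite E. ring. }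
  assert (HH : H (z l x) x <> 0).
  { intros [j [Hj E]]%cprod_eq0. exact (Hnz j Hj E). }
  assert (E := zero_ode_factored x). simpl in E.
  unfold H' in E. rewrite cprod_deriv_log in E by auto. fold (H (z l x) x) in E.
  set (S := csum others (fun j => - z' j x / (z l x - z j x))%C) in E.
  transitivity (- (2 * z' l x) * S)%C.
  - apply (Cmult_eq_reg_l _ _ _ HH).
    match type of E with ?Y = _ =>
      transitivity (Y - 2 * z' l x * (H (z l x) x * S))%C; [ring|] end.
    rewrite E. ring.
  - unfold S. rewrite <- csum_scal. apply csum_ext_in. intros j Hj.
    field. apply Hnz, Hj.
Qed.

End ZerosODE.

(** * The polynomial at [x = 0] *)

Lemma INR_eq_sub a b c : (a + b = c)%nat -> INR a = INR c - INR b.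
Proof. intros <-. rewrite plus_INR. ring. Qed.

Lemma csum_seq0_rev n f :
  csum (seq 0 (S n)) f = csum (seq 0 (S n)) (fun m => f (n - m)%nat).
Proof. rewrite csum_rev. apply csum_ext_in. intros j _. f_equal. lia. Qed.

Lemma Qderiv_at0 n k w : Qderiv n k 0 w =
  csum (seq 0 (S n)) (fun m => RtoC ((-2 * INR m) ^ k * Binomial.C n m) * Qfactor n m w)%C.
Proof. apply csum_ext_in. intros m _. rewrite Rmult_0_r, exp_0, Rmult_1_l. reflexivity. Qed.

Lemma cprod_shift_arg s K w :
  (cprod (seq (S s) K) (fun k => w + 1 - RtoC (INR k)) * (w - RtoC (INR (s + K))))%C =
  ((w - RtoC (INR s)) * cprod (seq (S s) K) (fun k => w - RtoC (INR k)))%C.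
Proof.
  replace (cprod (seq (S s) K) (fun k => w + 1 - RtoC (INR k))%C)
    with (cprod (seq s K) (fun k => w - RtoC (INR k))%C).
  - rewrite <- (cprod_cons s (seq (S s) K) (fun k => w - RtoC (INR k))%C).
    change (s :: seq (S s) K) with (seq s (S K)).
    rewrite seq_S, cprod_app. simpl. ring.
  - replace (S s) with (s + 1)%nat by lia. rewrite cprod_shift.
    apply cprod_ext_in. intros k _. rewrite plus_INR. simpl INR. push_RtoC. ring.
Qed.

Lemma Qfactor_shift n m w : (m < n)%nat ->
  ((w - RtoC (INR n)) * Qfactor n (S m) (w + 1) = (w + RtoC (INR n + 1)) * Qfactor n m w)%C.
Proof.
  intros Hm. unfold Qfactor.
  change (seq 1 (S m)) with (1%nat :: seq 2 m). rewrite cprod_cons.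
  replace (seq 2 m) with (seq (1 + 1) m) by reflexivity. rewrite cprod_shift.
  rewrite (cprod_ext_in (seq 1 m) _ (fun j => w + RtoC (INR n + 1 - INR j))%C)
    by (intros j _; rewrite plus_INR; simpl INR; push_RtoC; ring).
  assert (HS := cprod_shift_arg (S m) (n - S m) w).
  replace (S m + (n - S m))%nat with n in HS by lia.
  replace (n - m)%nat with (S (n - S m)) by lia. cbn [seq]. rewrite cprod_cons.
  transitivity ((w + 1 + RtoC (INR n + 1 - INR 1)) *
    cprod (seq 1 m) (fun j => w + RtoC (INR n + 1 - INR j)) *
    (cprod (seq (S (S m)) (n - S m)) (fun k => w + 1 - RtoC (INR k)) * (w - RtoC (INR n))))%C;
    [ring|].
  rewrite HS. simpl INR. push_RtoC. ring.
Qed.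

Lemma Q_ladder n w :
  ((w + RtoC (INR n)) * Qderiv n 0 0 w + Qderiv n 1 0 w =
   (w - RtoC (INR n)) * Qderiv n 0 0 (w + 1))%C.
Proof.
  rewrite !Qderiv_at0, <- !csum_scal, <- csum_plus.
  set (a := fun m => (RtoC (Binomial.C n m) * Qfactor n m w)%C).
  transitivity (csum (seq 0 (S n)) (fun m =>
    (w - RtoC (INR m)) * a m + RtoC (INR n - INR m) * a m)%C).
  { apply csum_ext_in. intros m _. unfold a. simpl pow. push_RtoC. ring. }
  symmetry. apply csum_reindex.
  - unfold a, Qfactor. rewrite Nat.sub_0_r. change (seq 1 0) with (@nil nat).
    assert (HS := cprod_shift_arg 0 n w). rewrite Nat.add_0_l in HS.
    transitivity (RtoC (Binomial.C n 0) * (cprod (seq 1 n) (fun k => w + 1 - RtoC (INR k)) *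
                                          (w - RtoC (INR n))))%C.
    + change (cprod nil ?f) with (RtoC 1). simpl pow. rewrite Rmult_1_l. ring.
    + rewrite HS. change (cprod nil ?f) with (RtoC 1). simpl INR. ring.
  - unfold a. rewrite Rminus_diag. ring.
  - intros m Hm. unfold a.
    assert (HQ := Qfactor_succ n m w Hm).
    assert (HB := f_equal RtoC (binomial_succ n m Hm)). push_RtoC in HB.
    transitivity (RtoC (Binomial.C n (S m)) * ((w - RtoC (INR n)) * Qfactor n (S m) (w + 1)))%C.
    { simpl pow. push_RtoC. ring. }
    rewrite Qfactor_shift by auto.
    transitivity (RtoC (Binomial.C n (S m)) * ((w - RtoC (INR (S m))) * Qfactor n (S m) w)
                  + RtoC (Binomial.C n (S m)) * RtoC (INR (S m)) * Qfactor n m w)%C.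
    + rewrite HQ, S_INR. push_RtoC. ring.
    + rewrite HB. push_RtoC. ring.
Qed.

Lemma Qfactor_opp n m w : (m <= n)%nat ->
  Qfactor n (n - m) (- w) = (RtoC ((-1) ^ n) * Qfactor n m w)%C.
Proof.
  intros Hm. unfold Qfactor. replace (n - (n - m))%nat with m by lia.
  assert (E1 : cprod (seq 1 (n - m)) (fun j => - w + RtoC (INR n + 1 - INR j))%C =
               (RtoC ((-1) ^ (n - m)) * cprod (seq (S m) (n - m)) (fun k => w - RtoC (INR k)))%C).
  { rewrite cprod_rev, (cprod_ext_in _ _ (fun j => - (w - RtoC (INR (j + m))))%C).
    - rewrite cprod_opp, length_seq. f_equal.
      replace (S m) with (1 + m)%nat by lia. rewrite cprod_shift. reflexivity.
    - intros j Hj. apply in_seq in Hj.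
      rewrite (INR_eq_sub (2 * 1 + (n - m) - 1 - j) (j + m) (n + 1)) by lia.
      rewrite !plus_INR. simpl INR. push_RtoC. ring. }
  assert (E2 : cprod (seq (S (n - m)) m) (fun k => - w - RtoC (INR k))%C =
               (RtoC ((-1) ^ m) * cprod (seq 1 m) (fun j => w + RtoC (INR n + 1 - INR j)))%C).
  { rewrite cprod_rev.
    rewrite (cprod_ext_in _ _ (fun k => - (w + RtoC (INR (2 * S (n - m) + m - 1 - k))))%C)
      by (intros; push_RtoC; ring).
    rewrite cprod_opp, length_seq. f_equal.
    replace (S (n - m)) with (1 + (n - m))%nat by lia. rewrite cprod_shift.
    apply cprod_ext_in. intros j Hj. apply in_seq in Hj.
    rewrite (INR_eq_sub (2 * (1 + (n - m)) + m - 1 - (j + (n - m))) j (n + 1)) by lia.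
    rewrite plus_INR. reflexivity. }
  rewrite E1, E2. replace n with ((n - m) + m)%nat at 3 by lia.
  rewrite pow_add, RtoC_mult. ring.
Qed.

Lemma Q0_opp n w : Qderiv n 0 0 (- w) = (RtoC ((-1) ^ n) * Qderiv n 0 0 w)%C.
Proof.
  rewrite !Qderiv_at0, csum_seq0_rev, <- csum_scal. apply csum_ext_in.
  intros m Hm. apply in_seq in Hm.
  rewrite Qfactor_opp, <- Binomial.pascal_step1 by lia. simpl pow. push_RtoC. ring.
Qed.

Lemma Q1_opp n w : Qderiv n 1 0 (- w) =
  (RtoC ((-1) ^ n) * (RtoC (-2 * INR n) * Qderiv n 0 0 w - Qderiv n 1 0 w))%C.
Proof.
  rewrite !Qderiv_at0, csum_seq0_rev.
  rewrite (csum_linear3 (fun a b _ => RtoC ((-1) ^ n) * (RtoC (-2 * INR n) * a - b))%C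
             _ _ _ (fun _ => RtoC 0)) by (intros; ring).
  apply csum_ext_in. intros m Hm. apply in_seq in Hm.
  rewrite Qfactor_opp, <- Binomial.pascal_step1, minus_INR by lia. simpl pow. push_RtoC. ring.
Qed.

Lemma Q0_step n w :
  ((w + RtoC (INR n)) * Qderiv n 0 0 (w - 1) = (w - RtoC (INR n)) * Qderiv n 0 0 (w + 1))%C.
Proof.
  assert (L1 := Q_ladder n w). assert (L2 := Q_ladder n (- w)).
  rewrite Q0_opp, Q1_opp in L2.
  replace (- w + 1)%C with (- (w - 1))%C in L2 by ring. rewrite Q0_opp in L2.
  assert (Hs : RtoC ((-1) ^ n) <> 0).
  { intros E. apply RtoC_inj in E. revert E. apply pow_nonzero. lra. }
  rewrite <- L1. apply (Cmult_eq_reg_l _ _ _ Hs).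
  match type of L2 with ?A = ?B => transitivity (- B)%C; [ring|] end.
  rewrite <- L2. push_RtoC. ring.
Qed.

(** * Initial values *)

Definition root0 (n j : nat) : R := INR (S n) - 2 * INR j.

Lemma Tpow_0 n : Tpow n 0 = 2 ^ n.
Proof. unfold Tpow. rewrite Rmult_0_r, exp_0. f_equal. Qed.

Section InitialValues.
Variables (n : nat) (z : nat -> R -> C).
Hypothesis hroots : forall (x : R) (w : C),
  Qpoly n x w = (RtoC ((1 + exp (-2 * x)) ^ n) * cprod (seq 1 n) (fun j => w - z j x))%C.
Hypothesis hdist : forall j k, (1 <= j <= n)%nat -> (1 <= k <= n)%nat -> j <> k ->
  z j 0 <> z k 0.
Hypothesis hord : forall j k, (1 <= j)%nat -> (j < k)%nat -> (k <= n)%nat ->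
  Re (z k 0) < Re (z j 0).

Lemma Q0_factor w : Qderiv n 0 0 w = (RtoC (2 ^ n) * cprod (seq 1 n) (fun j => w - z j 0))%C.
Proof. rewrite <- Qpoly_Qderiv0, hroots, Rmult_0_r, exp_0. do 3 f_equal. Qed.

Lemma Q0_root k : (1 <= k <= n)%nat -> Qderiv n 0 0 (z k 0) = 0.
Proof.
  intros Hk. rewrite Q0_factor.
  replace (cprod _ _) with (RtoC 0); [ring|].
  symmetry. apply cprod_eq0. exists k. split; [apply in_seq; lia | ring].
Qed.

Lemma zero0_top_or_shift k : (1 <= k <= n)%nat ->
  z k 0 = RtoC (INR n - 1) \/ exists j, (1 <= j <= n)%nat /\ z j 0 = (z k 0 + 2)%C.
Proof.
  intros Hk. assert (E := Q0_step n (z k 0 + 1)).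
  replace (z k 0 + 1 - 1)%C with (z k 0) in E by ring.
  rewrite Q0_root, Q0_factor in E by auto.
  assert (E' : ((z k 0 + 1 - RtoC (INR n)) * RtoC (2 ^ n) *
                cprod (seq 1 n) (fun j => z k 0 + 1 + 1 - z j 0))%C = 0)
    by (rewrite <- Cmult_assoc, <- E; ring).
  apply Cmult_integral in E' as [E'|E'].
  - left. apply Cmult_integral in E' as [E'|E'].
    + replace (z k 0) with (z k 0 + 1 - RtoC (INR n) + RtoC (INR n - 1))%C
        by (push_RtoC; ring).
      rewrite E'. ring.
    + exfalso. apply RtoC_inj in E'. revert E'. apply pow_nonzero. lra.
  - right. apply cprod_eq0 in E' as [j [Hj Ej]]. apply in_seq in Hj.
    exists j. split; [lia|].
    replace (z j 0) with (z k 0 + 1 + 1 - (z k 0 + 1 + 1 - z j 0))%C by ring.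
    rewrite Ej. ring.
Qed.

(* The shift [z_k(0) + 2] can only be the next larger zero, by the strict ordering. *)
Lemma zeros_at0 k : (1 <= k <= n)%nat -> z k 0 = RtoC (root0 n k).
Proof.
  induction k as [k IH] using (well_founded_induction lt_wf). intros Hk.
  assert (Hre : forall j, (1 <= j < k)%nat -> Re (z j 0) = root0 n j).
  { intros j Hj. rewrite IH by lia. reflexivity. }
  destruct (zero0_top_or_shift k Hk) as [Ez | [j [Hj Ej]]].
  - destruct (Nat.eq_dec k 1) as [-> | Hk1].
    + rewrite Ez. unfold root0. rewrite S_INR. f_equal. simpl. ring.
    + exfalso. apply (hdist 1 k); try lia.
      rewrite IH, Ez by lia. unfold root0. rewrite S_INR. f_equal. simpl. ring.
  - assert (Hrej : Re (z j 0) = Re (z k 0) + 2) by (rewrite Ej; reflexivity).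
    destruct (lt_eq_lt_dec j k) as [[Hjk | ->] | Hjk].
    + destruct (Nat.eq_dec (S j) k) as [<-|Hj1].
      * rewrite IH in Ej by lia.
        assert (E : z (S j) 0 = (RtoC (root0 n j) - 2)%C) by (rewrite Ej; ring).
        rewrite E. unfold root0. rewrite !S_INR. push_RtoC. ring.
      * exfalso. assert (Hlt : Re (z k 0) < Re (z (k - 1)%nat 0)) by (apply hord; lia).
        rewrite (Hre (k - 1)%nat) in Hlt by lia. rewrite (Hre j) in Hrej by lia.
        unfold root0 in *.
        assert (INR j + 1 <= INR (k - 1)) by (rewrite <- S_INR; apply le_INR; lia).
        lra.
    + lra.
    + assert (Hlt : Re (z j 0) < Re (z k 0)) by (apply hord; lia). lra.
Qed.

Variable z' : nat -> R -> C.
Hypothesis hd1 : forall j x, (1 <= j <= n)%nat -> is_derive (z j) x (z' j x).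

Lemma zprime_at0 l : (1 <= l <= n)%nat ->
  let c := root0 n l in
  z' l 0 = RtoC (- (c - INR n) * rprod (seq 1 n) (fun j => c + 1 - root0 n j) /
                 rprod (filter (fun j => negb (Nat.eqb j l)) (seq 1 n)) (fun j => c - root0 n j)).
Proof.
  intros hl c.
  assert (Hc : z l 0 = RtoC c) by (apply zeros_at0, hl).
  assert (L := Q_ladder n (RtoC c)).
  rewrite <- Hc in L at 2 3.
  rewrite Q0_root, (Qderiv1_at_zero n z z' hroots hd1 l hl) in L by auto.
  rewrite Hc, Q0_factor, Tpow_0 in L.
  rewrite (cprod_ext_in (seq 1 n) _ (fun j => RtoC (c + 1 - root0 n j))) in L
    by (intros j Hj; apply in_seq in Hj; rewrite zeros_at0 by lia; push_RtoC; ring).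
  rewrite (cprod_ext_in (filter _ _) _ (fun j => RtoC (c - root0 n j))) in L
    by (intros j [Hj _]%In_seq_remove; rewrite zeros_at0 by lia; push_RtoC; ring).
  rewrite !cprod_RtoC in L.
  set (G := rprod (seq 1 n) _) in *.
  set (P := rprod (filter _ _) _) in *.
  assert (HP : P <> 0).
  { apply rprod_neq0. intros j [_ Hj]%In_seq_remove. unfold c, root0.
    intros E. apply Hj, INR_eq. lra. }
  assert (HP' : RtoC P <> 0) by (intros E; apply RtoC_inj in E; contradiction).
  assert (H2 : RtoC (2 ^ n) <> 0)
    by (intros E; apply RtoC_inj in E; revert E; apply pow_nonzero; lra).
  rewrite RtoC_div by auto. push_RtoC.
  match type of L with ?A = ?B =>
    transitivity (A / (- (RtoC (2 ^ n) * RtoC P)))%C;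
    [|transitivity (B / (- (RtoC (2 ^ n) * RtoC P)))%C; [f_equal; exact L|]] end.
  - field. auto.
  - field. auto.
Qed.

End InitialValues.

(** * The closed form of [z_l'(0)] *)

Lemma filter_andb (l : list nat) (f g : nat -> bool) :
  filter (fun j => andb (f j) (g j)) l = filter g (filter f l).
Proof.
  induction l as [|a l IH]; simpl; auto.
  destruct (f a); simpl; auto. destruct (g a); simpl; rewrite IH; auto.
Qed.

Lemma seq_remove_split n k : (1 <= k <= n)%nat ->
  filter (fun j => negb (Nat.eqb j k)) (seq 1 n) = seq 1 (k - 1) ++ seq (S k) (n - k).
Proof.
  intros Hk. replace n with ((k - 1) + S (n - k))%nat at 1 by lia.
  rewrite seq_app, filter_app. f_equal.
  - apply filter_neq_notin. rewrite in_seq. lia.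
  - replace (1 + (k - 1))%nat with k by lia. cbn [seq filter]. rewrite Nat.eqb_refl. simpl.
    apply filter_neq_notin. rewrite in_seq. lia.
Qed.

Lemma rprod_add_fact s k :
  rprod (seq 1 k) (fun j => INR s + INR j) * INR (fact s) = INR (fact (s + k)).
Proof.
  induction k as [|k IH]; [simpl; rewrite Nat.add_0_r; ring|].
  rewrite seq_S, rprod_app, rprod_cons. change (rprod nil _) with 1.
  replace (s + S k)%nat with (S (s + k)) by lia.
  rewrite fact_simpl, mult_INR, <- IH, (S_INR (s + k)), !plus_INR. simpl INR. ring.
Qed.

Lemma rprod_seq_INR k : rprod (seq 1 k) INR = INR (fact k).
Proof.
  assert (H := rprod_add_fact 0 k). simpl in H. rewrite Rmult_1_r in H.
  rewrite <- H. apply rprod_ext_in. intros. ring.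
Qed.

Definition odd_prod k := rprod (seq 1 k) (fun i => 2 * INR i - 1).

Lemma odd_prod_fact k : odd_prod k * 2 ^ k * INR (fact k) = INR (fact (2 * k)).
Proof.
  induction k as [|k IH]; [unfold odd_prod; simpl; ring|].
  unfold odd_prod in *. rewrite seq_S, rprod_app, rprod_cons. change (rprod nil _) with 1.
  replace (2 * S k)%nat with (S (S (2 * k))) by lia.
  rewrite !fact_simpl, !mult_INR, <- IH, !S_INR, mult_INR. simpl. ring.
Qed.

Lemma odd_prod_eq k : odd_prod k = INR (fact (2 * k)) / (2 ^ k * INR (fact k)).
Proof.
  rewrite <- odd_prod_fact. field.
  split; [apply INR_fact_neq_0 | apply pow_nonzero; lra].
Qed.

Lemma rprod_odd_offset a b :
  rprod (seq 1 (S (a + b))) (fun j => 2 * INR j - 2 * INR (S a) + 1) =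
  (-1) ^ a * odd_prod a * odd_prod (S b).
Proof.
  replace (S (a + b)) with (a + S b)%nat by lia. rewrite seq_app, rprod_app, (rprod_rev 1 a).
  rewrite (rprod_ext_in (seq 1 a) _ (fun j => - (2 * INR j - 1))).
  - rewrite rprod_opp, length_seq, rprod_shift.
    rewrite (rprod_ext_in (seq 1 (S b)) _ (fun j => 2 * INR j - 1))
      by (intros; rewrite plus_INR, S_INR; ring).
    unfold odd_prod. ring.
  - intros j Hj. apply in_seq in Hj.
    rewrite (INR_eq_sub (2 * 1 + a - 1 - j) j (S a)) by lia. rewrite S_INR. ring.
Qed.

Lemma rprod_even_offset a b :
  rprod (filter (fun j => negb (Nat.eqb j (S a))) (seq 1 (S (a + b))))
    (fun j => 2 * INR j - 2 * INR (S a)) =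
  (-1) ^ a * 2 ^ a * INR (fact a) * (2 ^ b * INR (fact b)).
Proof.
  rewrite seq_remove_split by lia.
  replace (S a - 1)%nat with a by lia. replace (S (a + b) - S a)%nat with b by lia.
  rewrite rprod_app, (rprod_rev 1 a).
  rewrite (rprod_ext_in (seq 1 a) _ (fun j => - (2 * INR j))).
  - rewrite rprod_opp, length_seq, rprod_mult, rprod_const, length_seq, rprod_seq_INR.
    replace (S (S a)) with (1 + S a)%nat by lia. rewrite rprod_shift.
    rewrite (rprod_ext_in _ _ (fun j => 2 * INR j)) by (intros; rewrite plus_INR; ring).
    rewrite rprod_mult, rprod_const, length_seq, rprod_seq_INR. ring.
  - intros j Hj. apply in_seq in Hj.
    rewrite (INR_eq_sub (2 * 1 + a - 1 - j) j (S a)) by lia. ring.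
Qed.

Lemma rprod_sq_offset a b :
  rprod (filter (fun j => negb (Nat.eqb j (S a))) (seq 1 (S (a + b))))
    (fun j => 2 * (INR (S a) - INR j) ^ 2) =
  2 ^ (a + b) * INR (fact a) ^ 2 * INR (fact b) ^ 2.
Proof.
  rewrite (rprod_ext_in _ _ (fun j => / 2 * ((2 * INR j - 2 * INR (S a)) *
                                             (2 * INR j - 2 * INR (S a)))))
    by (intros; field).
  rewrite !rprod_mult, rprod_even_offset, rprod_const.
  rewrite seq_remove_split, length_app, !length_seq by lia.
  replace (S a - 1 + (S (a + b) - S a))%nat with (a + b)%nat by lia.
  rewrite pow_inv, !pow_add.
  assert (Hsq : (-1) ^ a * (-1) ^ a = 1)
    by (rewrite <- pow_add; replace (a + a)%nat with (2 * a)%nat by lia; apply pow_1_even).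
  assert (H2a : 2 ^ a <> 0) by (apply pow_nonzero; lra).
  assert (H2b : 2 ^ b <> 0) by (apply pow_nonzero; lra).
  transitivity (((-1) ^ a * (-1) ^ a) * 2 ^ a * 2 ^ b * INR (fact a) ^ 2 * INR (fact b) ^ 2).
  - field. auto.
  - rewrite Hsq. ring.
Qed.

Lemma rprod_diff_squares_pos d n : (1 <= d <= n)%nat ->
  rprod (filter (fun j => negb (Nat.eqb j d)) (seq 1 n)) (fun j => INR d ^ 2 - INR j ^ 2) *
  (2 * INR d ^ 2) = (-1) ^ (n - d) * INR (fact (n - d)) * INR (fact (n + d)).
Proof.
  intros Hd. rewrite seq_remove_split by lia.
  rewrite (rprod_ext_in _ _ (fun j => (INR d - INR j) * (INR d + INR j))) by (intros; ring).
  rewrite rprod_mult, !rprod_app.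
  assert (A1 : rprod (seq 1 (d - 1)) (fun j => INR d - INR j) = INR (fact (d - 1))).
  { rewrite rprod_rev, <- rprod_seq_INR. apply rprod_ext_in. intros j Hj. apply in_seq in Hj.
    rewrite (INR_eq_sub (2 * 1 + (d - 1) - 1 - j) j d) by lia. ring. }
  assert (A2 : rprod (seq (S d) (n - d)) (fun j => INR d - INR j) =
               (-1) ^ (n - d) * INR (fact (n - d))).
  { replace (S d) with (1 + d)%nat by lia.
    rewrite rprod_shift, (rprod_ext_in _ _ (fun j => - INR j)) by (intros; rewrite plus_INR; ring).
    rewrite rprod_opp, length_seq, rprod_seq_INR. reflexivity. }
  assert (B1 := rprod_add_fact d (d - 1)).
  assert (B2 : rprod (seq (S d) (n - d)) (fun j => INR d + INR j) * INR (fact (2 * d)) =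
               INR (fact (n + d))).
  { replace (S d) with (1 + d)%nat by lia. rewrite rprod_shift.
    rewrite (rprod_ext_in _ _ (fun j => INR (2 * d) + INR j))
      by (intros; rewrite !plus_INR, mult_INR; simpl; ring).
    rewrite rprod_add_fact. f_equal. f_equal. lia. }
  assert (Fd : INR (fact d) = INR d * INR (fact (d - 1))).
  { destruct d as [|d']; [lia|].
    rewrite fact_simpl, mult_INR, Nat.sub_succ, Nat.sub_0_r. reflexivity. }
  assert (F2d : INR (fact (2 * d)) = 2 * INR d * INR (fact (d + (d - 1)))).
  { replace (2 * d)%nat with (S (d + (d - 1))) by lia.
    rewrite fact_simpl, mult_INR, S_INR, plus_INR, minus_INR by lia. simpl. ring. }
  rewrite Fd in B1. rewrite F2d in B2. rewrite A1, A2, <- B2, <- B1. ring.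
Qed.

Lemma rprod_diff_squares d n : (d <= n)%nat ->
  rprod (filter (fun j => negb (Nat.eqb j d)) (seq 1 n)) (fun j => INR d ^ 2 - INR j ^ 2) *
  (if Nat.eqb d 0 then 1 else 2 * INR d ^ 2)
  = (-1) ^ (n - d) * INR (fact (n - d)) * INR (fact (n + d)).
Proof.
  intros Hd. destruct (Nat.eqb_spec d 0) as [-> | Hd0].
  - rewrite filter_neq_notin by (rewrite in_seq; lia).
    rewrite (rprod_ext_in _ _ (fun j => - (INR j * INR j))) by (intros; simpl; ring).
    rewrite rprod_opp, rprod_mult, length_seq, rprod_seq_INR, !Nat.sub_0_r, Nat.add_0_r. ring.
  - apply rprod_diff_squares_pos. lia.
Qed.

(* With n = a + b + 1 and l = a + 1, both the value of z_l'(0) found by [zprime_at0] and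
   [zprime0 n l] equal [zprime_value a b]. *)
Definition zprime_value a b : R :=
  INR (fact (2 * a + 1)) * INR (fact (2 * b + 1)) /
  (4 ^ (a + b) * INR (fact a) ^ 2 * INR (fact b) ^ 2).

Lemma zprime_at0_value a b : let n := S (a + b) in let c := root0 n (S a) in
  - (c - INR n) * rprod (seq 1 n) (fun j => c + 1 - root0 n j) /
  rprod (filter (fun j => negb (Nat.eqb j (S a))) (seq 1 n)) (fun j => c - root0 n j) =
  zprime_value a b.
Proof.
  cbv zeta.
  rewrite (rprod_ext_in (seq 1 _) _ (fun j => 2 * INR j - 2 * INR (S a) + 1))
    by (intros; unfold root0; ring).
  rewrite (rprod_ext_in (filter _ _) _ (fun j => 2 * INR j - 2 * INR (S a)))
    by (intros; unfold root0; ring).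
  rewrite rprod_odd_offset, rprod_even_offset. unfold zprime_value. rewrite !odd_prod_eq.
  assert (F1 : INR (fact (2 * S b)) = (2 * INR b + 2) * INR (fact (2 * b + 1))).
  { replace (2 * S b)%nat with (S (2 * b + 1)) by lia.
    rewrite fact_simpl, mult_INR, S_INR, plus_INR, mult_INR. simpl INR. ring. }
  assert (F2 : INR (fact (2 * a + 1)) = (2 * INR a + 1) * INR (fact (2 * a))).
  { replace (2 * a + 1)%nat with (S (2 * a)) by lia.
    rewrite fact_simpl, mult_INR, S_INR, mult_INR. simpl INR. ring. }
  assert (F3 : INR (fact (S b)) = (INR b + 1) * INR (fact b))
    by (rewrite fact_simpl, mult_INR, S_INR; ring).
  replace (4 ^ (a + b)) with (2 ^ a * 2 ^ a * (2 ^ b * 2 ^ b))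
    by (rewrite pow_add; replace 4 with (2 * 2) by ring; rewrite !Rpow_mult_distr; ring).
  rewrite F1, F2, F3. change (2 ^ S b) with (2 * 2 ^ b).
  unfold root0. rewrite !S_INR, !plus_INR.
  assert (H1 := INR_fact_neq_0 a). assert (H2 := INR_fact_neq_0 b).
  assert (H3 := INR_fact_neq_0 (2 * a)). assert (H4 := INR_fact_neq_0 (2 * b + 1)).
  assert (H5 : 2 ^ a <> 0) by (apply pow_nonzero; lra).
  assert (H6 : 2 ^ b <> 0) by (apply pow_nonzero; lra).
  assert (H7 : (-1) ^ a <> 0) by (apply pow_nonzero; lra).
  assert (H8 : INR b + 1 <> 0) by (pose proof (pos_INR b); lra).
  field. repeat split; auto.
Qed.

Lemma absdiff_eq a b : absdiff (S (a + b)) (S a) = ((b - a) + (a - b))%nat.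
Proof. unfold absdiff. lia. Qed.

Lemma INR_absdiff_sq a b : INR ((b - a) + (a - b)) ^ 2 = (INR b - INR a) ^ 2.
Proof.
  destruct (le_lt_dec a b).
  - replace (a - b)%nat with 0%nat by lia. rewrite Nat.add_0_r, minus_INR by lia. ring.
  - replace (b - a)%nat with 0%nat by lia. rewrite Nat.add_0_l, minus_INR by lia. ring.
Qed.

Lemma fact_odd_pair a b : let d := ((b - a) + (a - b))%nat in
  (-1) ^ (S (a + b) - d) * INR (fact (S (a + b) - d)) * INR (fact (S (a + b) + d)) =
  - (INR (fact (2 * a + 1)) * INR (fact (2 * b + 1))).
Proof.
  intros d. unfold d. destruct (le_lt_dec a b).
  - replace (S (a + b) - _)%nat with (S (2 * a)) by lia.
    replace (S (a + b) + _)%nat with (2 * b + 1)%nat by lia.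
    rewrite pow_1_odd. replace (S (2 * a)) with (2 * a + 1)%nat by lia. ring.
  - replace (S (a + b) - _)%nat with (S (2 * b)) by lia.
    replace (S (a + b) + _)%nat with (2 * a + 1)%nat by lia.
    rewrite pow_1_odd. replace (S (2 * b)) with (2 * b + 1)%nat by lia. ring.
Qed.

Lemma zprime0_numerator a b :
  rprod (filter (fun j => negb (Nat.eqb j (absdiff (S (a + b)) (S a)))) (seq 1 (S (a + b))))
    (fun j => (INR b - INR a) ^ 2 - INR j ^ 2) *
  (if Nat.eqb a b then 1 else 2 * (INR b - INR a) ^ 2)
  = - (INR (fact (2 * a + 1)) * INR (fact (2 * b + 1))).
Proof.
  rewrite absdiff_eq, <- fact_odd_pair, <- rprod_diff_squares by lia.
  rewrite INR_absdiff_sq.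
  replace (Nat.eqb ((b - a) + (a - b)) 0) with (Nat.eqb a b); [reflexivity|].
  destruct (Nat.eqb_spec a b), (Nat.eqb_spec ((b - a) + (a - b)) 0); auto; lia.
Qed.

Lemma zprime0_denominator a b :
  rprod (filter (fun j => negb (Nat.eqb j (S b)))
           (filter (fun j => negb (Nat.eqb j (S a))) (seq 1 (S (a + b)))))
    (fun j => 2 * (INR (S a) - INR j) ^ 2) *
  (if Nat.eqb a b then 1 else 2 * (INR b - INR a) ^ 2)
  = 2 ^ (a + b) * INR (fact a) ^ 2 * INR (fact b) ^ 2.
Proof.
  rewrite <- rprod_sq_offset. destruct (Nat.eqb_spec a b) as [<- | Hab].
  - rewrite Rmult_1_r, filter_neq_notin; [reflexivity|].
    intros [_ Hf]%filter_In. rewrite Nat.eqb_refl in Hf. discriminate.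
  - rewrite (rprod_remove (filter _ (seq 1 (S (a + b)))) _ (S b)).
    + rewrite !S_INR. ring.
    + apply NoDup_filter, seq_NoDup.
    + apply filter_In. split; [apply in_seq; lia|].
      destruct (Nat.eqb_spec (S b) (S a)); [lia | reflexivity].
Qed.

Lemma zprime0_value a b : zprime0 (S (a + b)) (S a) = zprime_value a b.
Proof.
  unfold zprime0. cbv zeta.
  replace (S (S (a + b)) - S a)%nat with (S b) by lia.
  replace (S (a + b) - 1)%nat with (a + b)%nat by lia.
  replace (INR (S (S (a + b))) - 2 * INR (S a)) with (INR b - INR a)
    by (rewrite !S_INR, plus_INR; ring).
  rewrite (filter_andb _ (fun j => negb (Nat.eqb j (S a))) (fun j => negb (Nat.eqb j (S b)))).
  assert (HN := zprime0_numerator a b). assert (HP := zprime0_denominator a b).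
  set (D := if Nat.eqb a b then 1 else 2 * (INR b - INR a) ^ 2) in *.
  assert (HD : D <> 0).
  { unfold D. destruct (Nat.eqb_spec a b); [lra|].
    assert (INR b <> INR a) by (intros E%INR_eq; lia).
    apply Rmult_integral_contrapositive_currified; [lra | apply pow_nonzero; lra]. }
  unfold zprime_value.
  replace (4 ^ (a + b)) with (2 ^ (a + b) * 2 ^ (a + b))
    by (rewrite <- Rpow_mult_distr; f_equal; ring).
  apply (f_equal (fun u => u / D)) in HN, HP.
  rewrite Rmult_div_l in HN, HP by auto. rewrite HN, HP.
  assert (H2 : 2 ^ (a + b) <> 0) by (apply pow_nonzero; lra).
  assert (Ha := INR_fact_neq_0 a). assert (Hb := INR_fact_neq_0 b).
  field. auto.
Qed.

Lemma zprime0_closed_form n l : (1 <= l <= n)%nat ->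
  let c := root0 n l in
  - (c - INR n) * rprod (seq 1 n) (fun j => c + 1 - root0 n j) /
  rprod (filter (fun j => negb (Nat.eqb j l)) (seq 1 n)) (fun j => c - root0 n j) = zprime0 n l.
Proof.
  intros Hl. destruct l as [|a]; [lia|].
  assert (exists b, n = S (a + b)) as [b ->] by (exists (n - S a)%nat; lia).
  rewrite zprime0_value. apply zprime_at0_value.
Qed.

Theorem mainTheorem3 (n : nat) (hn : (1 <= n)%nat)
  (z z' z'' : nat -> R -> C)
  (hroots : forall (x : R) (w : C),
      Qpoly n x w =
      Cmult (RtoC ((1 + exp (-2 * x)) ^ n))
            (cprod (seq 1 n) (fun j => Cminus w (z j x))))
  (hd1 : forall j x, (1 <= j <= n)%nat -> is_derive (z j) x (z' j x))
  (hd2 : forall j x, (1 <= j <= n)%nat -> is_derive (z' j) x (z'' j x))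
  (hdist : forall j k x, (1 <= j <= n)%nat -> (1 <= k <= n)%nat -> j <> k ->
      z j x <> z k x)
  (hord : exists eps : R, 0 < eps /\
      forall x, Rabs x < eps ->
      forall j k, (1 <= j)%nat -> (j < k)%nat -> (k <= n)%nat ->
        Im (z j x) = 0 /\ Im (z k x) = 0 /\ Re (z k x) < Re (z j x)) :
  forall l, (1 <= l <= n)%nat ->
    (forall x,
       Cplus (z'' l x) (Cmult (RtoC 2) (Cmult (z l x) (z' l x))) =
       csum (filter (fun j => negb (Nat.eqb j l)) (seq 1 n))
         (fun j => Cdiv (Cmult (RtoC 2) (Cmult (z' l x) (z' j x)))
                        (Cminus (z l x) (z j x))))
    /\ z l 0 = RtoC (INR (S n) - 2 * INR l)
    /\ z' l 0 = RtoC (zprime0 n l).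
Proof.
  intros l hl.
  assert (hdist0 : forall j k, (1 <= j <= n)%nat -> (1 <= k <= n)%nat -> j <> k ->
                     z j 0 <> z k 0) by (intros; apply hdist; auto).
  assert (hord0 : forall j k, (1 <= j)%nat -> (j < k)%nat -> (k <= n)%nat ->
                    Re (z k 0) < Re (z j 0)).
  { destruct hord as [eps [Heps Hord]]. intros j k Hj Hjk Hk.
    apply Hord; auto. rewrite Rabs_R0. exact Heps. }
  split; [|split].
  - exact (zero_ode n z z' z'' hroots hd1 hd2 l hl hdist).
  - exact (zeros_at0 n z hroots hdist0 hord0 l hl).
  - rewrite (zprime_at0 n z hroots hdist0 hord0 z' hd1 l hl).
    f_equal. apply zprime0_closed_form, hl.
Qed.
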